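(* Let $\eta=3/\sqrt{8\pi e}$. (a) For $n\in\mathbb{N}$ let $h=2/\sqrt n$ and $\mathcal X=\{-\sqrt n+\frac{2k}{\sqrt n}:k=0,1,\dots,n\}$. For a $2\times2$ positive definite matrix $B$ and $\mathbf x=(x_1,x_2)^{\top}$ define $$I_d=\int_{\mathbb{R}}h\sum_{x_1\in\mathcal X}\exp\{-\mathbf x^{\top}B\mathbf x/2\}\,dx_2,\qquad I_c=\int_{\mathbb{R}^2}\exp\{-\mathbf x^{\top}B\mathbf x/2\}\,d\mathbf x.$$ Then $I_d\le(1+\frac{\eta B_{11}}{n})I_c$. (b) For $n,n'\in\mathbb{N}$ let additionally $h'=2/\sqrt{n'}$ and $\mathcal X'=\{-\sqrt{n'}+\frac{2k}{\sqrt{n'}}:k=0,\dots,n'\}$. For a $3\times3$ positive definite $B$ and $\mathbf x=(x_1,x_2,x_3)^{\top}$ define $$I_d=\int_{\mathbb{R}}hh'\sum_{x_1\in\mathcal X}\sum_{x_2\in\mathcal X'}\exp\{-\mathbf x^{\top}B\mathbf x/2\}\,dx_3,\qquad I_c=\int_{\mathbb{R}^3}\exp\{-\mathbf x^{\top}B\mathbf x/2\}\,d\mathbf x.$$ Then $I_d\le(1+\frac{\eta B_{11}}{n})(1+\frac{\eta B_{22}}{n'})I_c$.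
   Context: $B_{ij}$ denotes the $(i,j)$ entry of $B$. *)

From Stdlib Require Import Reals Lra.
Open Scope R_scope.

Definition eta : R := 3 / sqrt (8 * PI * exp 1).

Definition is_integral_R (f : R -> R) (l : R) : Prop :=
  (forall a b : R, inhabited (Riemann_integrable f a b)) /\
  forall eps : R, 0 < eps -> exists M : R,
    forall (a b : R) (pr : Riemann_integrable f a b),
      a <= - M -> M <= b -> Rabs (RiemannInt pr - l) < eps.

Definition grid (n k : nat) : R := - sqrt (INR n) + 2 * INR k / sqrt (INR n).
Definition mesh (n : nat) : R := 2 / sqrt (INR n).

(* Matrices are given by their entries B i j, indices 1-based. *)
Definition qform2 (B : nat -> nat -> R) (x1 x2 : R) : R :=
  x1 * B 1%nat 1%nat * x1 + x1 * B 1%nat 2%nat * x2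
  + x2 * B 2%nat 1%nat * x1 + x2 * B 2%nat 2%nat * x2.

Definition posdef2 (B : nat -> nat -> R) : Prop :=
  B 1%nat 2%nat = B 2%nat 1%nat /\
  forall x1 x2 : R, (x1 <> 0 \/ x2 <> 0) -> 0 < qform2 B x1 x2.

Definition qform3 (B : nat -> nat -> R) (x1 x2 x3 : R) : R :=
  let x := fun i : nat => match i with 1%nat => x1 | 2%nat => x2 | _ => x3 end in
  sum_f_R0 (fun i => sum_f_R0 (fun j =>
      x (S i) * B (S i) (S j) * x (S j)) 2) 2.

Definition posdef3 (B : nat -> nat -> R) : Prop :=
  (forall i j : nat, (1 <= i <= 3)%nat -> (1 <= j <= 3)%nat -> B i j = B j i) /\
  forall x1 x2 x3 : R, (x1 <> 0 \/ x2 <> 0 \/ x3 <> 0) -> 0 < qform3 B x1 x2 x3.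

Definition gauss2 (B : nat -> nat -> R) (x1 x2 : R) : R := exp (- qform2 B x1 x2 / 2).
Definition gauss3 (B : nat -> nat -> R) (x1 x2 x3 : R) : R :=
  exp (- qform3 B x1 x2 x3 / 2).

(* The Riemann sums are bounded one variable at a time.  The derivative of
   [gauss a x = exp (- a x^2 / 2)] is the sum of a nondecreasing function and the
   nonincreasing function [gauss_deriv_dec a], whose total variation is
   [2 sqrt a e^(-1/2)].  For such a derivative the midpoint rule undershoots the
   integral over a cell of width [h] by at most [h^2/8] times the variation of the
   nonincreasing part on the cell.  Summed over the grid, with [h^2/8 = 1/(2n)],
   the error is at most [sqrt a e^(-1/2) / n], which is at most [eta a / n] times
   the mass of [gauss a], because that mass is at least [4/3 sqrt (2/a)]
   (from [e^t >= 1 + t]) and [pi <= 4].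
   Completing the square in [x1] turns every [x1]-slice of the 2- and
   3-dimensional Gaussians into a scaled, shifted [gauss (B 1 1)].  In dimension 3
   the [x1]-marginal is then a multiple of the 2-dimensional Gaussian of the Schur
   complement of [B 1 1], whose first diagonal entry is at most [B 2 2].
   Integrating the pointwise bounds in the last variable gives the theorem. *)

From Stdlib Require Import Reals Lra Psatz FunctionalExtensionality.
From Coquelicot Require Import Coquelicot.
Open Scope R_scope.

(** * Improper integrals over the real line *)

Lemma is_integral_R_RInt f l :
  is_integral_R f l <->
  (forall a b, ex_RInt f a b) /\
  forall eps, 0 < eps -> exists M, forall a b,
    a <= - M -> M <= b -> Rabs (RInt f a b - l) < eps.
Proof.
  split; intros [Hex Hlim]; split.
  - intros a b. destruct (Hex a b) as [pr]. now apply ex_RInt_Reals_1.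
  - intros eps Heps. destruct (Hlim eps Heps) as [M HM]. exists M.
    intros a b Ha Hb. destruct (Hex a b) as [pr].
    rewrite (RInt_Reals _ _ _ pr). now apply HM.
  - intros a b. constructor. now apply ex_RInt_Reals_0.
  - intros eps Heps. destruct (Hlim eps Heps) as [M HM]. exists M.
    intros a b pr Ha Hb. rewrite <- RInt_Reals. now apply HM.
Qed.

Lemma is_integral_R_ex_RInt f l a b : is_integral_R f l -> ex_RInt f a b.
Proof. now intros [Hex _]%is_integral_R_RInt. Qed.

Lemma RInt_le_RInt_superset f a b c d :
  (forall x, 0 <= f x) -> (forall u v, ex_RInt f u v) ->
  c <= a -> a <= b -> b <= d -> RInt f a b <= RInt f c d.
Proof.
  intros Hf Hex Hca Hab Hbd.
  rewrite <- (RInt_Chasles f c a d), <- (RInt_Chasles f a b d) by auto.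
  assert (0 <= RInt f c a) by (apply RInt_ge_0; auto).
  assert (0 <= RInt f b d) by (apply RInt_ge_0; auto).
  unfold plus; simpl. lra.
Qed.

Lemma is_integral_R_RInt_le f l a b :
  (forall x, 0 <= f x) -> is_integral_R f l -> a <= b -> RInt f a b <= l.
Proof.
  intros Hf [Hex Hlim]%is_integral_R_RInt Hab. apply Rnot_lt_le; intro Hlt.
  destruct (Hlim (RInt f a b - l)) as [M HM]; [lra|].
  specialize (HM (Rmin a (- M)) (Rmax b M) (Rmin_r _ _) (Rmax_r _ _)).
  assert (RInt f a b <= RInt f (Rmin a (- M)) (Rmax b M)).
  { apply RInt_le_RInt_superset; auto using Rmin_l, Rmax_l. }
  apply Rabs_def2 in HM. lra.
Qed.

Lemma is_integral_R_ge0 f l : (forall x, 0 <= f x) -> is_integral_R f l -> 0 <= l.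
Proof.
  intros Hf Hl.
  assert (H0 : RInt f 0 0 = 0) by exact (RInt_point (V := R_CompleteNormedModule) 0 f).
  rewrite <- H0. now apply is_integral_R_RInt_le; [..|lra].
Qed.

Lemma is_integral_R_le f g lf lg : (forall x, f x <= g x) ->
  is_integral_R f lf -> is_integral_R g lg -> lf <= lg.
Proof.
  intros Hfg [Fex Flim]%is_integral_R_RInt [Gex Glim]%is_integral_R_RInt.
  apply Rnot_lt_le; intro Hlt.
  destruct (Flim ((lf - lg) / 2)) as [Mf HMf]; [lra|].
  destruct (Glim ((lf - lg) / 2)) as [Mg HMg]; [lra|].
  set (M := Rabs Mf + Rabs Mg).
  assert (Mf <= M /\ Mg <= M /\ 0 <= M) as (? & ? & ?).
  { pose proof (Rle_abs Mf); pose proof (Rle_abs Mg).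
    pose proof (Rabs_pos Mf); pose proof (Rabs_pos Mg). unfold M; lra. }
  specialize (HMf (- M) M ltac:(lra) ltac:(lra)).
  specialize (HMg (- M) M ltac:(lra) ltac:(lra)).
  assert (RInt f (- M) M <= RInt g (- M) M) by (apply RInt_le; auto; lra).
  apply Rabs_def2 in HMf, HMg. lra.
Qed.

Lemma is_integral_R_unique f l1 l2 :
  is_integral_R f l1 -> is_integral_R f l2 -> l1 = l2.
Proof.
  intros H1 H2. apply Rle_antisym; eapply is_integral_R_le; eauto; intros; lra.
Qed.

Lemma is_integral_R_scal f l c :
  is_integral_R f l -> is_integral_R (fun x => c * f x) (c * l).
Proof.
  intros [Hex Hlim]%is_integral_R_RInt. apply is_integral_R_RInt. split.
  - intros a b. apply (ex_RInt_scal f a b c), Hex.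
  - intros eps Heps. pose proof (Rabs_pos c).
    destruct (Hlim (eps / (Rabs c + 1))) as [M HM]; [apply Rdiv_lt_0_compat; lra|].
    exists M. intros a b Ha Hb. specialize (HM a b Ha Hb).
    assert (Hs : RInt (fun x => c * f x) a b = c * RInt f a b)
      by exact (RInt_scal f a b c (Hex a b)).
    rewrite Hs.
    replace (c * RInt f a b - c * l) with (c * (RInt f a b - l)) by ring.
    rewrite Rabs_mult.
    apply Rle_lt_trans with (Rabs c * (eps / (Rabs c + 1))).
    + apply Rmult_le_compat_l; lra.
    + apply (Rmult_lt_reg_r (Rabs c + 1)); [lra|]. field_simplify; nra.
Qed.

Lemma is_integral_R_shift f l c :
  is_integral_R f l -> is_integral_R (fun x => f (x + c)) l.
Proof.
  intros [Hex Hlim]%is_integral_R_RInt.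
  assert (Hlin : forall a b, RInt (fun x => f (x + c)) a b = RInt f (a + c) (b + c)
                             /\ ex_RInt (fun x => f (x + c)) a b).
  { intros a b. pose proof (Hex (1 * a + c) (1 * b + c)) as H.
    assert (Hfun : forall x, scal 1 (f (1 * x + c)) = f (x + c)).
    { intros x. unfold scal; simpl; unfold mult; simpl. now rewrite !Rmult_1_l. }
    split.
    - transitivity (RInt (fun x => scal 1 (f (1 * x + c))) a b).
      + apply RInt_ext. intros x _. now rewrite Hfun.
      + etransitivity; [exact (RInt_comp_lin f 1 c a b H)|]. f_equal; ring.
    - eapply ex_RInt_ext; [intros x _; apply Hfun | exact (ex_RInt_comp_lin f 1 c a b H)]. }
  apply is_integral_R_RInt. split; [apply Hlin|].
  intros eps Heps. destruct (Hlim eps Heps) as [M HM]. exists (M + Rabs c).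
  intros a b Ha Hb. rewrite (proj1 (Hlin a b)).
  pose proof (Rle_abs c); pose proof (Rle_abs (- c)); rewrite Rabs_Ropp in *.
  apply HM; lra.
Qed.

Lemma is_integral_R_ext f g l :
  (forall x, f x = g x) -> is_integral_R f l -> is_integral_R g l.
Proof. intros Hfg Hf. replace g with f; [exact Hf|]. now apply functional_extensionality. Qed.

(** * The midpoint rule *)

Lemma is_derive_sub_le f df s a b : a <= b ->
  (forall x, a <= x <= b -> is_derive f x (df x)) ->
  (forall x, a <= x <= b -> df x <= s) -> f b - f a <= s * (b - a).
Proof.
  intros Hab Hd Hs. destruct (Req_dec a b) as [<-|Hne]; [lra|].
  destruct (MVT_cor2 f df a b) as (c & Hc & Hcab); [lra|now intros; apply is_derive_Reals, Hd|].
  specialize (Hs c ltac:(lra)). nra.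
Qed.

Lemma is_derive_sub_ge f df s a b : a <= b ->
  (forall x, a <= x <= b -> is_derive f x (df x)) ->
  (forall x, a <= x <= b -> s <= df x) -> s * (b - a) <= f b - f a.
Proof.
  intros Hab Hd Hs. destruct (Req_dec a b) as [<-|Hne]; [lra|].
  destruct (MVT_cor2 f df a b) as (c & Hc & Hcab); [lra|now intros; apply is_derive_Reals, Hd|].
  specialize (Hs c ltac:(lra)). nra.
Qed.

Lemma is_RInt_affine y0 s c u v :
  is_RInt (fun x => y0 + s * (x - c)) u v
    (y0 * (v - u) + s * ((v - c) * (v - c) - (u - c) * (u - c)) / 2).
Proof.
  set (F x := y0 * x + s * ((x - c) * (x - c)) / 2).
  replace (y0 * (v - u) + _) with (minus (F v) (F u)) by (unfold F, minus, plus, opp; simpl; field).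
  apply (is_RInt_derive (V := R_CompleteNormedModule)); intros x _.
  - unfold F. auto_derive; auto. field.
  - apply (ex_derive_continuous (K := R_AbsRing) (V := R_NormedModule)). auto_derive; auto.
Qed.

Section Midpoint.

Variables f df psi : R -> R.
Hypothesis f_derive : forall x, is_derive f x (df x).
Hypothesis psi_noninc : forall x y, x <= y -> psi y <= psi x.
Hypothesis df_sub_psi_nondec : forall x y, x <= y -> df x - psi x <= df y - psi y.

Lemma ex_RInt_derive u v : ex_RInt f u v.
Proof.
  apply (ex_RInt_continuous (V := R_CompleteNormedModule)). intros x _.
  apply (ex_derive_continuous (K := R_AbsRing) (V := R_NormedModule)).
  eexists. apply f_derive.
Qed.

Lemma midpoint_le_RInt c h : 0 < h ->
  h * f c <= RInt f (c - h / 2) (c + h / 2)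
             + h * h / 8 * (psi (c - h / 2) - psi (c + h / 2)).
Proof.
  intros Hh. set (l := c - h / 2). set (r := c + h / 2).
  set (sl := df c + (psi l - psi c)). set (sr := df c - (psi c - psi r)).
  assert (Hl : forall x, l <= x <= c -> f c + sl * (x - c) <= f x).
  { intros x Hx. enough (f c - f x <= sl * (c - x)) by lra.
    apply (is_derive_sub_le f df); [lra|intros; apply f_derive|].
    intros y Hy. pose proof (psi_noninc l y ltac:(lra)).
    pose proof (df_sub_psi_nondec y c ltac:(lra)). unfold sl; lra. }
  assert (Hr : forall x, c <= x <= r -> f c + sr * (x - c) <= f x).
  { intros x Hx. enough (sr * (x - c) <= f x - f c) by lra.
    apply (is_derive_sub_ge f df); [lra|intros; apply f_derive|].
    intros y Hy. pose proof (psi_noninc y r ltac:(lra)).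
    pose proof (df_sub_psi_nondec c y ltac:(lra)). unfold sr; lra. }
  pose proof (is_RInt_affine (f c) sl c l c) as Il.
  pose proof (is_RInt_affine (f c) sr c c r) as Ir.
  assert (RInt (fun x => f c + sl * (x - c)) l c <= RInt f l c).
  { apply RInt_le; [unfold l; lra|eexists; exact Il|apply ex_RInt_derive|].
    intros x Hx; apply Hl; lra. }
  assert (RInt (fun x => f c + sr * (x - c)) c r <= RInt f c r).
  { apply RInt_le; [unfold r; lra|eexists; exact Ir|apply ex_RInt_derive|].
    intros x Hx; apply Hr; lra. }
  rewrite (is_RInt_unique _ _ _ _ Il) in *. rewrite (is_RInt_unique _ _ _ _ Ir) in *.
  rewrite <- (RInt_Chasles f l c r) by apply ex_RInt_derive.
  unfold plus, sl, sr, l, r in *; simpl in *. nra.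
Qed.

Lemma midpoint_sum_le_RInt x0 h n : 0 < h ->
  h * sum_f_R0 (fun k => f (x0 + INR k * h)) n <=
  RInt f (x0 - h / 2) (x0 + INR n * h + h / 2)
  + h * h / 8 * (psi (x0 - h / 2) - psi (x0 + INR n * h + h / 2)).
Proof.
  intros Hh. induction n as [|n IH].
  - simpl. replace (x0 + 0 * h) with x0 by ring.
    replace (x0 + 0 * h + h / 2) with (x0 + h / 2) by ring. now apply midpoint_le_RInt.
  - cbn [sum_f_R0]. rewrite S_INR.
    pose proof (midpoint_le_RInt (x0 + (INR n + 1) * h) h Hh) as Hcell.
    replace (x0 + (INR n + 1) * h - h / 2) with (x0 + INR n * h + h / 2) in Hcell by field.
    rewrite <- (RInt_Chasles f (x0 - h / 2) (x0 + INR n * h + h / 2)) by apply ex_RInt_derive.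
    unfold plus; simpl. lra.
Qed.

End Midpoint.

(** * The Gaussian *)

Definition xgauss (t : R) : R := t * exp (- (t * t) / 2).

Lemma is_derive_xgauss (t : R) : is_derive xgauss t ((1 - t * t) * exp (- (t * t) / 2)).
Proof. unfold xgauss. auto_derive; auto. set (E := exp _). clearbody E. field. Qed.

Lemma xgauss_nondec_mid t u : -1 <= t -> t <= u -> u <= 1 -> xgauss t <= xgauss u.
Proof.
  intros Ht Htu Hu. enough (0 * (u - t) <= xgauss u - xgauss t) by lra.
  apply (is_derive_sub_ge xgauss _ 0 t u Htu (fun y _ => is_derive_xgauss y)).
  intros y Hy. apply Rmult_le_pos; [nra|apply Rlt_le, exp_pos].
Qed.

Lemma xgauss_noninc_out t u : t <= u -> 1 <= t \/ u <= -1 -> xgauss u <= xgauss t.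
Proof.
  intros Htu Hout. enough (xgauss u - xgauss t <= 0 * (u - t)) by lra.
  apply (is_derive_sub_le xgauss _ 0 t u Htu (fun y _ => is_derive_xgauss y)).
  intros y Hy. pose proof (exp_pos (- (y * y) / 2)).
  assert (1 - y * y <= 0) by (destruct Hout; nra). nra.
Qed.

Definition clamp (t : R) : R := Rmax (-1) (Rmin t 1).

Lemma clamp_low t : t <= -1 -> clamp t = -1.
Proof. intros Ht. unfold clamp. rewrite Rmin_left, Rmax_left; lra. Qed.

Lemma clamp_mid t : -1 <= t <= 1 -> clamp t = t.
Proof. intros Ht. unfold clamp. rewrite Rmin_left, Rmax_right; lra. Qed.

Lemma clamp_high t : 1 <= t -> clamp t = 1.
Proof. intros Ht. unfold clamp. rewrite Rmin_right, Rmax_right; lra. Qed.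

Lemma clamp_bounds t : -1 <= clamp t <= 1.
Proof.
  unfold clamp. split; [apply Rmax_l|]. apply Rmax_lub; [lra|apply Rmin_r].
Qed.

Lemma clamp_nondec t u : t <= u -> clamp t <= clamp u.
Proof.
  intros Htu. unfold clamp.
  apply Rmax_lub; [apply Rmax_l|]. eapply Rle_trans; [|apply Rmax_r].
  apply Rmin_glb; [eapply Rle_trans; [apply Rmin_l|lra] | apply Rmin_r].
Qed.

Lemma xgauss_clamp_nondec t u : t <= u -> xgauss (clamp t) <= xgauss (clamp u).
Proof.
  intros Htu. pose proof (clamp_bounds t); pose proof (clamp_bounds u).
  apply xgauss_nondec_mid; try lra. now apply clamp_nondec.
Qed.

Lemma xgauss_sub_clamp_noninc t u : t <= u ->
  xgauss u - xgauss (clamp u) <= xgauss t - xgauss (clamp t).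
Proof.
  intros Htu. destruct (Rle_lt_dec 1 t) as [Ht|Ht].
  { rewrite !clamp_high by lra. pose proof (xgauss_noninc_out t u). lra. }
  destruct (Rle_lt_dec u (-1)) as [Hu|Hu].
  { rewrite !clamp_low by lra. pose proof (xgauss_noninc_out t u). lra. }
  assert (0 <= xgauss t - xgauss (clamp t)).
  { destruct (Rle_lt_dec t (-1)).
    - rewrite clamp_low by lra. pose proof (xgauss_noninc_out t (-1)). lra.
    - rewrite clamp_mid by lra. lra. }
  assert (xgauss u - xgauss (clamp u) <= 0).
  { destruct (Rle_lt_dec 1 u).
    - rewrite clamp_high by lra. pose proof (xgauss_noninc_out 1 u). lra.
    - rewrite clamp_mid by lra. lra. }
  lra.
Qed.

Lemma xgauss_clamp_bounds t : - exp (- / 2) <= xgauss (clamp t) <= exp (- / 2).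
Proof.
  assert (H1 : xgauss 1 = exp (- / 2)) by (unfold xgauss; rewrite Rmult_1_l; f_equal; field).
  assert (Hm1 : xgauss (-1) = - exp (- / 2)).
  { unfold xgauss. replace (- (-1 * -1) / 2) with (- / 2) by field. ring. }
  pose proof (clamp_bounds t).
  rewrite <- Hm1, <- H1. split; apply xgauss_nondec_mid; lra.
Qed.

Definition gauss (a x : R) : R := exp (- (a * (x * x)) / 2).

Lemma gauss_pos a x : 0 < gauss a x.
Proof. apply exp_pos. Qed.

Lemma is_derive_gauss a (x : R) : is_derive (gauss a) x (- (a * x) * gauss a x).
Proof. unfold gauss. auto_derive; auto. set (E := exp _). clearbody E. field. Qed.

Lemma gauss_deriv_eq a x : 0 <= a ->
  - (a * x) * gauss a x = - sqrt a * xgauss (sqrt a * x).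
Proof.
  intros Ha. unfold xgauss, gauss. pose proof (sqrt_sqrt a Ha) as Hs.
  replace (sqrt a * x * (sqrt a * x)) with (sqrt a * sqrt a * (x * x)) by ring.
  rewrite Hs. replace (- (a * x)) with (- (sqrt a * sqrt a) * x) by (rewrite Hs; ring). ring.
Qed.

(* [gauss a]' = - sqrt a * xgauss (sqrt a x) is this nonincreasing function plus a
   nondecreasing one: [xgauss] increases exactly on [[-1, 1]], so [xgauss o clamp]
   is nondecreasing and [xgauss - xgauss o clamp] nonincreasing. *)
Definition gauss_deriv_dec (a x : R) : R := - sqrt a * xgauss (clamp (sqrt a * x)).

Lemma gauss_deriv_dec_noninc a x y : x <= y -> gauss_deriv_dec a y <= gauss_deriv_dec a x.
Proof.
  intros Hxy. unfold gauss_deriv_dec. pose proof (sqrt_pos a).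
  pose proof (xgauss_clamp_nondec (sqrt a * x) (sqrt a * y) ltac:(nra)). nra.
Qed.

Lemma gauss_deriv_sub_dec_nondec a x y : 0 <= a -> x <= y ->
  - (a * x) * gauss a x - gauss_deriv_dec a x <= - (a * y) * gauss a y - gauss_deriv_dec a y.
Proof.
  intros Ha Hxy. rewrite !gauss_deriv_eq by exact Ha. unfold gauss_deriv_dec.
  pose proof (sqrt_pos a).
  pose proof (xgauss_sub_clamp_noninc (sqrt a * x) (sqrt a * y) ltac:(nra)). nra.
Qed.

Lemma gauss_deriv_dec_sub_le a x y :
  gauss_deriv_dec a x - gauss_deriv_dec a y <= 2 * sqrt a * exp (- / 2).
Proof.
  unfold gauss_deriv_dec. pose proof (sqrt_pos a).
  pose proof (xgauss_clamp_bounds (sqrt a * x)). pose proof (xgauss_clamp_bounds (sqrt a * y)).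
  nra.
Qed.

Lemma gauss_integral_lb a J : 0 < a -> is_integral_R (gauss a) J -> 4 / 3 * sqrt (2 / a) <= J.
Proof.
  intros Ha HJ. set (s := sqrt (2 / a)).
  assert (Hs : 0 < s) by (apply sqrt_lt_R0, Rdiv_lt_0_compat; lra).
  assert (Hs2 : s * s = 2 / a) by (apply sqrt_sqrt; apply Rlt_le, Rdiv_lt_0_compat; lra).
  set (F x := x - a * (x * x * x) / 6).
  assert (Hint : is_RInt (fun x => 1 - a * (x * x) / 2) (- s) s (4 / 3 * s)).
  { replace (4 / 3 * s) with (minus (F s) (F (- s))).
    2:{ unfold F, minus, plus, opp; simpl.
        replace (a * (s * s * s)) with (a * (s * s) * s) by ring.
        replace (a * (- s * - s * - s)) with (- (a * (s * s) * s)) by ring.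
        rewrite Hs2. field. lra. }
    apply (is_RInt_derive (V := R_CompleteNormedModule)); intros x _.
    - unfold F. auto_derive; auto. field.
    - apply (ex_derive_continuous (K := R_AbsRing) (V := R_NormedModule)). auto_derive; auto. }
  assert (RInt (fun x => 1 - a * (x * x) / 2) (- s) s <= RInt (gauss a) (- s) s).
  { apply RInt_le; [lra|eexists; exact Hint|eapply is_integral_R_ex_RInt, HJ|].
    intros x _. unfold gauss. pose proof (exp_ineq1_le (- (a * (x * x)) / 2)). lra. }
  rewrite (is_RInt_unique _ _ _ _ Hint) in H.
  pose proof (is_integral_R_RInt_le (gauss a) J (- s) s (fun x => Rlt_le _ _ (gauss_pos a x)) HJ).
  lra.
Qed.

Lemma eta_lb : 3 <= 4 * sqrt 2 * exp (/ 2) * eta.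
Proof.
  assert (He : sqrt (exp 1) = exp (/ 2)).
  { apply sqrt_lem_1; try (left; apply exp_pos). rewrite <- exp_plus. f_equal; field. }
  assert (H8 : sqrt (8 * PI) <= 4 * sqrt 2).
  { replace (4 * sqrt 2) with (sqrt (16 * 2)).
    - apply sqrt_le_1_alt. pose proof PI_4. lra.
    - rewrite sqrt_mult by lra. f_equal. apply sqrt_lem_1; lra. }
  assert (Hpos : 0 < sqrt (8 * PI)) by (apply sqrt_lt_R0; pose proof PI_RGT_0; lra).
  pose proof (exp_pos (/ 2)).
  unfold eta. rewrite sqrt_mult, He by (try (left; apply exp_pos); pose proof PI_RGT_0; lra).
  apply Rle_trans with (sqrt (8 * PI) * exp (/ 2) * (3 / (sqrt (8 * PI) * exp (/ 2)))).
  - right. field. lra.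
  - apply Rmult_le_compat_r; [apply Rlt_le, Rdiv_lt_0_compat; [lra|nra]|nra].
Qed.

Lemma eta_pos : 0 < eta.
Proof.
  unfold eta. apply Rdiv_lt_0_compat; [lra|]. apply sqrt_lt_R0.
  pose proof PI_RGT_0. pose proof (exp_pos 1). nra.
Qed.

Lemma gauss_variation_le_eta a J : 0 < a -> is_integral_R (gauss a) J ->
  sqrt a * exp (- / 2) <= eta * a * J.
Proof.
  intros Ha HJ. pose proof (gauss_integral_lb a J Ha HJ) as HJlb.
  rewrite sqrt_div in HJlb by lra. pose proof eta_lb.
  set (sa := sqrt a) in *. set (s2 := sqrt 2) in *.
  assert (Hsa : 0 < sa) by (apply sqrt_lt_R0; lra).
  assert (Hsa2 : sa * sa = a) by (apply sqrt_sqrt; lra).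
  assert (HsaJ : 4 / 3 * s2 <= sa * J).
  { apply (Rmult_le_compat_l sa) in HJlb; [|lra].
    replace (sa * (4 / 3 * (s2 / sa))) with (4 / 3 * s2) in HJlb by (field; lra). exact HJlb. }
  assert (HE : exp (- / 2) * exp (/ 2) = 1).
  { rewrite <- exp_plus, <- exp_0. f_equal. field. }
  pose proof eta_pos. pose proof (exp_pos (/ 2)). pose proof (exp_pos (- / 2)).
  replace (eta * a * J) with (eta * sa * (sa * J)) by (rewrite <- Hsa2; ring).
  apply Rle_trans with (eta * sa * (4 / 3 * s2)); [|apply Rmult_le_compat_l; nra].
  replace (sa * exp (- / 2)) with (sa / 3 * exp (- / 2) * 3) by field.
  replace (eta * sa * (4 / 3 * s2)) with (sa / 3 * exp (- / 2) * (4 * s2 * exp (/ 2) * eta))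
    by (rewrite <- (Rmult_1_l (eta * sa * _)), <- HE; field).
  apply Rmult_le_compat_l; [|lra]. apply Rmult_le_pos; lra.
Qed.

(** * Riemann sums on the grid *)

Lemma sum_f_R0_swap (G : nat -> nat -> R) n m :
  sum_f_R0 (fun k => sum_f_R0 (fun k' => G k k') m) n =
  sum_f_R0 (fun k' => sum_f_R0 (fun k => G k k') n) m.
Proof.
  induction n as [|n IH]; simpl; [reflexivity|]. now rewrite IH, <- sum_plus.
Qed.

Lemma sum_f_R0_scal_l c (f : nat -> R) N :
  c * sum_f_R0 f N = sum_f_R0 (fun i => c * f i) N.
Proof. rewrite scal_sum. apply sum_eq. intros; ring. Qed.

Lemma double_sum_le (G : nat -> nat -> R) (g : nat -> R) h h' C n n' : 0 <= h' ->
  (forall k', h * sum_f_R0 (fun k => G k k') n <= C * g k') ->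
  h * h' * sum_f_R0 (fun k => sum_f_R0 (fun k' => G k k') n') n
  <= C * (h' * sum_f_R0 g n').
Proof.
  intros Hh' Hrow. apply Rle_trans with (h' * sum_f_R0 (fun k' => C * g k') n').
  - rewrite sum_f_R0_swap, (Rmult_comm h h'), Rmult_assoc, sum_f_R0_scal_l.
    apply Rmult_le_compat_l; [exact Hh'|]. apply sum_Rle. intros k' _. apply Hrow.
  - right. rewrite <- (sum_f_R0_scal_l C g n'). ring.
Qed.

Lemma INR_ge1 n : (1 <= n)%nat -> 1 <= INR n.
Proof. intros Hn. apply (le_INR 1). exact Hn. Qed.

Lemma mesh_pos n : (1 <= n)%nat -> 0 < mesh n.
Proof.
  intros Hn. apply Rdiv_lt_0_compat; [lra|]. apply sqrt_lt_R0. pose proof (INR_ge1 n Hn). lra.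
Qed.

Lemma eta_factor_ge1 n a : (1 <= n)%nat -> 0 <= a -> 1 <= 1 + eta * a / INR n.
Proof.
  intros Hn Ha. pose proof eta_pos. pose proof (INR_ge1 n Hn).
  assert (0 <= eta * a / INR n) by (apply Rdiv_le_0_compat; nra). lra.
Qed.

Lemma eta_factor_le n a a' : (1 <= n)%nat -> a <= a' ->
  1 + eta * a / INR n <= 1 + eta * a' / INR n.
Proof.
  intros Hn Haa'. pose proof eta_pos. pose proof (INR_ge1 n Hn).
  apply Rplus_le_compat_l. unfold Rdiv. apply Rmult_le_compat_r; [|nra].
  apply Rlt_le, Rinv_0_lt_compat; lra.
Qed.

Lemma riemann_sum_gauss_le n a J mu : (1 <= n)%nat -> 0 < a ->
  is_integral_R (gauss a) J ->
  mesh n * sum_f_R0 (fun k => gauss a (grid n k + mu)) n <= (1 + eta * a / INR n) * J.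
Proof.
  intros Hn Ha HJ. pose proof (INR_ge1 n Hn) as HnR.
  set (sn := sqrt (INR n)).
  assert (Hsn : 0 < sn) by (apply sqrt_lt_R0; lra).
  assert (Hsn2 : sn * sn = INR n) by (apply sqrt_sqrt; lra).
  set (h := mesh n). pose proof (mesh_pos n Hn) as Hh. fold h in Hh.
  assert (Hh2 : h * h = 4 / INR n) by (unfold h, mesh; fold sn; rewrite <- Hsn2; field; lra).
  set (x0 := - sn + mu).
  assert (Hgrid : forall k, grid n k + mu = x0 + INR k * h)
    by (intros k; unfold grid, h, mesh, x0; fold sn; field; lra).
  rewrite (sum_eq _ _ n (fun k _ => f_equal (gauss a) (Hgrid k))).
  pose proof (midpoint_sum_le_RInt (gauss a) (fun x => - (a * x) * gauss a x)
    (gauss_deriv_dec a) (is_derive_gauss a) (gauss_deriv_dec_noninc a)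
    (fun x y => gauss_deriv_sub_dec_nondec a x y (Rlt_le _ _ Ha)) x0 h n Hh) as Hmid.
  pose proof (is_integral_R_RInt_le (gauss a) J (x0 - h / 2) (x0 + INR n * h + h / 2)
    (fun x => Rlt_le _ _ (gauss_pos a x)) HJ ltac:(nra)).
  pose proof (gauss_deriv_dec_sub_le a (x0 - h / 2) (x0 + INR n * h + h / 2)).
  pose proof (gauss_variation_le_eta a J Ha HJ).
  rewrite Hh2 in Hmid.
  apply Rle_trans with (J + 4 / INR n / 8 * (2 * sqrt a * exp (- / 2))).
  - assert (0 < 4 / INR n / 8) by (apply Rdiv_lt_0_compat; [apply Rdiv_lt_0_compat|]; lra).
    nra.
  - replace ((1 + eta * a / INR n) * J) with (J + / INR n * (eta * a * J)) by (field; lra).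
    replace (4 / INR n / 8 * (2 * sqrt a * exp (- / 2))) with (/ INR n * (sqrt a * exp (- / 2)))
      by (field; lra).
    apply Rplus_le_compat_l, Rmult_le_compat_l; [apply Rlt_le, Rinv_0_lt_compat|]; lra.
Qed.

Lemma is_integral_R_gauss_slice a E mu F l : 0 < E ->
  (forall x, F x = E * gauss a (x + mu)) -> is_integral_R F l ->
  is_integral_R (gauss a) (l / E).
Proof.
  intros HE HF Hl. unfold Rdiv. rewrite Rmult_comm.
  apply (is_integral_R_ext (fun x => / E * F (x + - mu))).
  - intros x. rewrite HF. replace (x + - mu + mu) with x by ring. field. lra.
  - apply (is_integral_R_shift (fun x => / E * F x)), is_integral_R_scal, Hl.
Qed.

Lemma riemann_sum_gauss_slice_le n a E mu F l : (1 <= n)%nat -> 0 < a -> 0 < E ->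
  (forall x, F x = E * gauss a (x + mu)) -> is_integral_R F l ->
  mesh n * sum_f_R0 (fun k => F (grid n k)) n <= (1 + eta * a / INR n) * l.
Proof.
  intros Hn Ha HE HF Hl.
  pose proof (riemann_sum_gauss_le n a (l / E) mu Hn Ha
    (is_integral_R_gauss_slice a E mu F l HE HF Hl)) as Hsum.
  assert (HFsum : sum_f_R0 (fun k => F (grid n k)) n
                 = E * sum_f_R0 (fun k => gauss a (grid n k + mu)) n).
  { rewrite sum_f_R0_scal_l. apply sum_eq. intros k _. apply HF. }
  rewrite HFsum. replace l with (E * (l / E)) by (field; lra).
  replace (mesh n * (E * _)) with (E * (mesh n * sum_f_R0 (fun k => gauss a (grid n k + mu)) n))
    by ring.
  replace ((1 + eta * a / INR n) * (E * (l / E))) with (E * ((1 + eta * a / INR n) * (l / E)))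
    by ring.
  apply Rmult_le_compat_l; lra.
Qed.

(** * Gaussians of positive definite forms *)

Lemma gauss2_factor B x1 x2 : B 1%nat 2%nat = B 2%nat 1%nat -> B 1%nat 1%nat <> 0 ->
  gauss2 B x1 x2 =
  gauss (B 2%nat 2%nat - B 1%nat 2%nat * B 1%nat 2%nat / B 1%nat 1%nat) x2
  * gauss (B 1%nat 1%nat) (x1 + B 1%nat 2%nat * x2 / B 1%nat 1%nat).
Proof.
  intros Hsym Ha. unfold gauss2, gauss, qform2. rewrite <- exp_plus, <- Hsym.
  f_equal. field. exact Ha.
Qed.

Lemma gauss2_pos B x1 x2 : 0 < gauss2 B x1 x2.
Proof. apply exp_pos. Qed.

Lemma posdef2_B11_pos B : posdef2 B -> 0 < B 1%nat 1%nat.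
Proof.
  intros [_ Hpd]. pose proof (Hpd 1 0 ltac:(left; lra)) as H. unfold qform2 in H. lra.
Qed.

(* The Schur complement of the entry [B 1 1] in a 3x3 matrix, reindexed as a
   2x2 matrix with indices 1, 2. *)
Definition schur (B : nat -> nat -> R) (i j : nat) : R :=
  B (S i) (S j) - B 1%nat (S i) * B 1%nat (S j) / B 1%nat 1%nat.

Lemma qform3_schur B x1 x2 x3 :
  (forall i j, (1 <= i <= 3)%nat -> (1 <= j <= 3)%nat -> B i j = B j i) ->
  B 1%nat 1%nat <> 0 ->
  qform3 B x1 x2 x3 =
  B 1%nat 1%nat * ((x1 + (B 1%nat 2%nat * x2 + B 1%nat 3%nat * x3) / B 1%nat 1%nat)
                   * (x1 + (B 1%nat 2%nat * x2 + B 1%nat 3%nat * x3) / B 1%nat 1%nat))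
  + qform2 (schur B) x2 x3.
Proof.
  intros Hsym Ha. unfold qform3, qform2, schur. simpl.
  rewrite (Hsym 2%nat 1%nat), (Hsym 3%nat 1%nat), (Hsym 3%nat 2%nat) by lia.
  field. exact Ha.
Qed.

Lemma posdef3_B11_pos B : posdef3 B -> 0 < B 1%nat 1%nat.
Proof.
  intros [_ Hpd]. pose proof (Hpd 1 0 0 ltac:(left; lra)) as H.
  unfold qform3 in H. simpl in H. lra.
Qed.

Lemma posdef3_schur B : posdef3 B -> posdef2 (schur B).
Proof.
  intros HB. pose proof (posdef3_B11_pos B HB) as Ha. destruct HB as [Hsym Hpd]. split.
  - unfold schur. simpl. rewrite (Hsym 3%nat 2%nat) by lia. unfold Rdiv. ring.
  - intros x2 x3 Hx.
    set (x1 := - ((B 1%nat 2%nat * x2 + B 1%nat 3%nat * x3) / B 1%nat 1%nat)).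
    pose proof (Hpd x1 x2 x3 (or_intror Hx)) as H.
    rewrite qform3_schur in H by (auto; lra).
    replace (x1 + _) with 0 in H by (unfold x1; ring). lra.
Qed.

Lemma posdef3_schur11_le B : posdef3 B -> schur B 1%nat 1%nat <= B 2%nat 2%nat.
Proof.
  intros HB. pose proof (posdef3_B11_pos B HB). unfold schur; simpl.
  assert (0 <= B 1%nat 2%nat * B 1%nat 2%nat / B 1%nat 1%nat) by (apply Rdiv_le_0_compat; nra).
  lra.
Qed.

Lemma gauss3_factor B x1 x2 x3 :
  (forall i j, (1 <= i <= 3)%nat -> (1 <= j <= 3)%nat -> B i j = B j i) ->
  B 1%nat 1%nat <> 0 ->
  gauss3 B x1 x2 x3 = gauss2 (schur B) x2 x3
    * gauss (B 1%nat 1%nat) (x1 + (B 1%nat 2%nat * x2 + B 1%nat 3%nat * x3) / B 1%nat 1%nat).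
Proof.
  intros Hsym Ha. unfold gauss3, gauss2, gauss. rewrite <- exp_plus, qform3_schur by auto.
  f_equal. field. exact Ha.
Qed.

Lemma riemann_sum_gauss2_le n B x2 l : (1 <= n)%nat -> posdef2 B ->
  is_integral_R (fun x1 => gauss2 B x1 x2) l ->
  mesh n * sum_f_R0 (fun k => gauss2 B (grid n k) x2) n
  <= (1 + eta * B 1%nat 1%nat / INR n) * l.
Proof.
  intros Hn HB Hl. pose proof (posdef2_B11_pos B HB) as Ha.
  apply (riemann_sum_gauss_slice_le n _
    (gauss (B 2%nat 2%nat - B 1%nat 2%nat * B 1%nat 2%nat / B 1%nat 1%nat) x2)
    (B 1%nat 2%nat * x2 / B 1%nat 1%nat) (fun x1 => gauss2 B x1 x2) l Hn Ha (gauss_pos _ x2));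
    [|exact Hl].
  intros x1. apply gauss2_factor; [exact (proj1 HB)|lra].
Qed.

Lemma gauss3_marginal B x3 g : posdef3 B ->
  (forall x2, is_integral_R (fun x1 => gauss3 B x1 x2 x3) (g x2)) ->
  exists K, 0 < K /\ forall x2, g x2 = K * gauss2 (schur B) x2 x3.
Proof.
  intros HB Hg. pose proof (posdef3_B11_pos B HB) as Ha.
  assert (HJ : forall x2, is_integral_R (gauss (B 1%nat 1%nat)) (g x2 / gauss2 (schur B) x2 x3)).
  { intros x2. apply (is_integral_R_gauss_slice _ _
      ((B 1%nat 2%nat * x2 + B 1%nat 3%nat * x3) / B 1%nat 1%nat)
      (fun x1 => gauss3 B x1 x2 x3) _ (gauss2_pos _ _ _)).
    - intros x1. apply gauss3_factor; [exact (proj1 HB)|lra].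
    - apply Hg. }
  exists (g 0 / gauss2 (schur B) 0 x3). split.
  - pose proof (gauss_integral_lb _ _ Ha (HJ 0)).
    assert (0 < sqrt (2 / B 1%nat 1%nat)) by (apply sqrt_lt_R0, Rdiv_lt_0_compat; lra). lra.
  - intros x2. rewrite <- (is_integral_R_unique _ _ _ (HJ x2) (HJ 0)).
    pose proof (gauss2_pos (schur B) x2 x3). field. lra.
Qed.

Lemma riemann_sum_gauss3_le n n' B x3 g l :
  (1 <= n)%nat -> (1 <= n')%nat -> posdef3 B ->
  (forall x2, is_integral_R (fun x1 => gauss3 B x1 x2 x3) (g x2)) ->
  is_integral_R g l ->
  mesh n * mesh n' * sum_f_R0 (fun k => sum_f_R0 (fun k' =>
      gauss3 B (grid n k) (grid n' k') x3) n') n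
  <= (1 + eta * B 1%nat 1%nat / INR n) * (1 + eta * B 2%nat 2%nat / INR n') * l.
Proof.
  intros Hn Hn' HB Hg Hl. pose proof (posdef3_B11_pos B HB) as Ha.
  pose proof (posdef3_schur B HB) as HS. pose proof (posdef2_B11_pos _ HS) as HSa.
  destruct (gauss3_marginal B x3 g HB Hg) as (K & HK & Hgx).
  assert (Hrow : forall k', mesh n * sum_f_R0 (fun k => gauss3 B (grid n k) (grid n' k') x3) n
                            <= (1 + eta * B 1%nat 1%nat / INR n) * g (grid n' k')).
  { intros k'. apply (riemann_sum_gauss_slice_le n _ _
      ((B 1%nat 2%nat * grid n' k' + B 1%nat 3%nat * x3) / B 1%nat 1%nat)
      (fun x1 => gauss3 B x1 (grid n' k') x3) _ Hn Ha (gauss2_pos (schur B) (grid n' k') x3)).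
    - intros x1. apply gauss3_factor; [exact (proj1 HB)|lra].
    - apply Hg. }
  assert (Hcol : mesh n' * sum_f_R0 (fun k' => g (grid n' k')) n'
                 <= (1 + eta * schur B 1%nat 1%nat / INR n') * l).
  { apply (riemann_sum_gauss_slice_le n' _
      (K * gauss (schur B 2%nat 2%nat - schur B 1%nat 2%nat * schur B 1%nat 2%nat
                  / schur B 1%nat 1%nat) x3)
      (schur B 1%nat 2%nat * x3 / schur B 1%nat 1%nat) g l Hn' HSa).
    - apply Rmult_lt_0_compat; [exact HK|apply gauss_pos].
    - intros x2. rewrite Hgx, gauss2_factor by (exact (proj1 HS) || lra). ring.
    - exact Hl. }
  assert (Hl0 : 0 <= l).
  { apply (is_integral_R_ge0 g l); [|exact Hl]. intros x2. rewrite Hgx.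
    apply Rlt_le, Rmult_lt_0_compat; [exact HK|apply gauss2_pos]. }
  apply Rle_trans with ((1 + eta * B 1%nat 1%nat / INR n)
                        * (mesh n' * sum_f_R0 (fun k' => g (grid n' k')) n')).
  { apply double_sum_le; [apply Rlt_le, mesh_pos, Hn'|exact Hrow]. }
  rewrite Rmult_assoc. apply Rmult_le_compat_l.
  { pose proof (eta_factor_ge1 n _ Hn (Rlt_le _ _ Ha)). lra. }
  apply (Rle_trans _ _ _ Hcol), Rmult_le_compat_r; [exact Hl0|].
  apply eta_factor_le; [exact Hn'|]. now apply posdef3_schur11_le.
Qed.

Theorem mainTheorem16 :
  (* (a) *)
  (forall (n : nat) (B : nat -> nat -> R) (Id Ic : R) (g : R -> R),
     (1 <= n)%nat -> posdef2 B ->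
     is_integral_R (fun x2 => mesh n *
        sum_f_R0 (fun k => gauss2 B (grid n k) x2) n) Id ->
     (forall x2, is_integral_R (fun x1 => gauss2 B x1 x2) (g x2)) ->
     is_integral_R g Ic ->
     Id <= (1 + eta * B 1%nat 1%nat / INR n) * Ic)
  /\
  (* (b) *)
  (forall (n n' : nat) (B : nat -> nat -> R) (Id Ic : R)
          (g2 : R -> R -> R) (g1 : R -> R),
     (1 <= n)%nat -> (1 <= n')%nat -> posdef3 B ->
     is_integral_R (fun x3 => mesh n * mesh n' *
        sum_f_R0 (fun k => sum_f_R0 (fun k' =>
           gauss3 B (grid n k) (grid n' k') x3) n') n) Id ->
     (forall x2 x3, is_integral_R (fun x1 => gauss3 B x1 x2 x3) (g2 x2 x3)) ->
     (forall x3, is_integral_R (fun x2 => g2 x2 x3) (g1 x3)) ->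
     is_integral_R g1 Ic ->
     Id <= (1 + eta * B 1%nat 1%nat / INR n)
           * (1 + eta * B 2%nat 2%nat / INR n') * Ic).
Proof.
  split.
  - intros n B Id Ic g Hn HB HId Hg HIc.
    apply (is_integral_R_le _ _ _ _
      (fun x2 => riemann_sum_gauss2_le n B x2 (g x2) Hn HB (Hg x2)) HId).
    now apply is_integral_R_scal.
  - intros n n' B Id Ic g2 g1 Hn Hn' HB HId Hg2 Hg1 HIc.
    apply (is_integral_R_le _ _ _ _
      (fun x3 => riemann_sum_gauss3_le n n' B x3 (fun x2 => g2 x2 x3) (g1 x3)
                   Hn Hn' HB (fun x2 => Hg2 x2 x3) (Hg1 x3)) HId).
    now apply is_integral_R_scal.
Qed.
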